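(* Let $V$ and $W$ be oriented $d$-dimensional inner-product spaces. Then for every $A\in\mathrm{Hom}(V,W)$, \[ \mathrm{dist}^2(A,\mathrm{SO}(V,W))\le\mathrm{dist}^2(A,\mathrm{O}(V,W))+4|\det A|^{1/d}\,\mathbf{1}_{\{\det A<0\}}. \]
   Context: $\mathrm{O}(V,W)$ is the set of linear isometries $V\to W$, and $\mathrm{SO}(V,W)$ is the subset of orientation-preserving ones. $\det A$ is the determinant of the matrix of $A$ with respect to positively oriented orthonormal bases of $V$ and $W$. Distances are measured in the Frobenius (Hilbert–Schmidt) norm. $\mathbf{1}_{\{\det A<0\}}$ equals $1$ if $\det A<0$ and $0$ otherwise. *)

From HB Require Import structures.
From mathcomp Require Import all_boot all_order all_algebra.
From mathcomp Require Import all_classical all_reals.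
From mathcomp Require Import exp.
Set Implicit Arguments. Unset Strict Implicit. Unset Printing Implicit Defensive.
Import Order.TTheory GRing.Theory Num.Theory.
Local Open Scope ring_scope.
Local Open Scope classical_set_scope.

(* Matrices w.r.t. positively oriented orthonormal bases of V and W. *)
Definition orth_set (R : realType) (d : nat) : set 'M[R]_d :=
  [set Q | Q *m Q^T = 1%:M].
Definition sorth_set (R : realType) (d : nat) : set 'M[R]_d :=
  [set Q | Q *m Q^T = 1%:M /\ \det Q = 1].

Definition frob (R : realType) (d : nat) (A : 'M[R]_d) : R :=
  Num.sqrt (\sum_(i < d) \sum_(j < d) A i j ^+ 2).

Definition mdist (R : realType) (d : nat) (A : 'M[R]_d) (S : set 'M[R]_d) : R :=
  inf [set frob (A - Q) | Q in S].

(* By compactness some Q in O(d) maximizes tr(Q^T A); then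
   dist(A, O(d)) = |A - Q| and B := Q^T A is symmetric, since no rotation in a
   coordinate plane can increase tr(Q^T A).  If det Q = 1 there is nothing to
   prove.  Otherwise, for every w <> 0 the product Q H_w with the reflection H_w
   in w lies in SO(d), and |A - Q H_w|^2 = |A - Q|^2 + 4 w^T B w / w^T w.  So
   m := (dist^2(A, SO(d)) - dist^2(A, O(d))) / 4 bounds the Rayleigh quotient of
   B from below, and if m > 0 an induction on Schur complements gives
   m^d <= det B = - det A, i.e. det A < 0 and m <= |det A|^(1/d). *)

From Pilot Require Import Defs.
From HB Require Import structures.
From mathcomp Require Import all_boot all_order all_algebra.
From mathcomp Require Import all_classical all_reals.
From mathcomp Require Import exp.
From mathcomp Require Import topology normedtype derive.
From mathcomp Require Import ring lra.
(* [topology] exports a metric-space [mdist]; re-import Defs so that [mdist]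
   is the distance from a matrix to a set of matrices. *)
Import Pilot.Defs.
Import Order.TTheory GRing.Theory Num.Theory.
Import numFieldTopology.Exports numFieldNormedType.Exports.
Local Open Scope classical_set_scope.
Local Open Scope ring_scope.
Set Implicit Arguments. Unset Strict Implicit. Unset Printing Implicit Defensive.

Lemma det1D_mulmxC (R : comNzRingType) m n (A : 'M[R]_(m, n)) (B : 'M[R]_(n, m)) :
  \det (1%:M + A *m B) = \det (1%:M + B *m A).
Proof.
have /(congr1 (@determinant R _)) :
    block_mx (1%:M + A *m B) (- A) 0 1%:M *m block_mx 1%:M 0 B 1%:M =
    block_mx 1%:M 0 B 1%:M *m block_mx 1%:M (- A) 0 (1%:M + B *m A).
  rewrite !mulmx_block !(mulmx1, mul1mx, mulmx0, mul0mx, addr0, add0r).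
  by rewrite mulmxN mulNmx addrK addrCA addNr addr0.
by rewrite !det_mulmx !det_ublock det_lblock !det1 !mul1r !mulr1.
Qed.

Lemma det_block_scalar (F : fieldType) n (a : F) (r : 'rV[F]_n) (c : 'cV[F]_n)
    (C : 'M[F]_n) : a != 0 ->
  \det (block_mx a%:M r c C) = a * \det (C - a^-1 *: (c *m r)).
Proof.
move=> a_neq0; have -> : block_mx a%:M r c C =
    block_mx a%:M 0 c 1%:M *m block_mx 1%:M (a^-1 *: r) 0 (C - a^-1 *: (c *m r)).
  rewrite mulmx_block !(mulmx1, mul1mx, mulmx0, mul0mx, addr0, add0r).
  by rewrite mul_scalar_mx scalerA divff // scale1r -scalemxAr addrC subrK.
by rewrite det_mulmx det_lblock det_ublock !det1 det_scalar1 !mulr1 mul1r.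
Qed.

Section BilinearForm.
Variables (R : realFieldType) (n : nat).
Implicit Types (B C : 'M[R]_n) (x y z u v : 'cV[R]_n).

Definition form B x y : R := (x^T *m B *m y) 0 0.

Lemma formDl B x y z : form B (x + y) z = form B x z + form B y z.
Proof. by rewrite /form linearD !mulmxDl mxE. Qed.

Lemma formDr B x y z : form B x (y + z) = form B x y + form B x z.
Proof. by rewrite /form mulmxDr mxE. Qed.

Lemma formZl B a x y : form B (a *: x) y = a * form B x y.
Proof. by rewrite /form linearZ -!scalemxAl mxE. Qed.

Lemma formZr B a x y : form B x (a *: y) = a * form B x y.
Proof. by rewrite /form -scalemxAr mxE. Qed.

Lemma formr0 B x : form B x 0 = 0.
Proof. by rewrite /form mulmx0 mxE. Qed.

Lemma formBm B C x y : form (B - C) x y = form B x y - form C x y.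
Proof. by rewrite /form mulmxBr mulmxBl mxE [X in _ + X]mxE. Qed.

Lemma formZm a B x y : form (a *: B) x y = a * form B x y.
Proof. by rewrite /form -scalemxAr -scalemxAl mxE. Qed.

Lemma form_outerM B u v x y : form (u *m v^T *m B) x y = form 1%:M x u * form B v y.
Proof.
rewrite /form (_ : x^T *m _ *m y = x^T *m u *m (v^T *m B *m y)); last first.
  by rewrite !mulmxA.
by rewrite mxE big_ord1 mulmx1.
Qed.

Lemma form_delta B i j : form B (delta_mx i 0) (delta_mx j 0) = B i j.
Proof. by rewrite /form trmx_delta -rowE -colE !mxE. Qed.

Lemma mxtrace_outerM B x y : \tr (x *m y^T *m B) = form B y x.
Proof. by rewrite -mulmxA mxtrace_mulC /mxtrace big_ord1. Qed.

Lemma outer_mulmx x y z u : x *m y^T *m (z *m u^T) = form 1%:M y z *: (x *m u^T).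
Proof.
by rewrite mulmxA -(mulmxA x) [y^T *m z]mx11_scalar mul_mx_scalar -scalemxAl /form mulmx1.
Qed.

Lemma form1E x : form 1%:M x x = \sum_i x i 0 ^+ 2.
Proof. by rewrite /form mulmx1 mxE; apply: eq_bigr => i _; rewrite mxE expr2. Qed.

Lemma form1_ge0 x : 0 <= form 1%:M x x.
Proof. by rewrite form1E; apply: sumr_ge0 => i _; exact: sqr_ge0. Qed.

Lemma form1_eq0 x : (form 1%:M x x == 0) = (x == 0).
Proof.
rewrite form1E psumr_eq0 => [|i _]; last exact: sqr_ge0.
apply/allP/eqP => [x0|-> i _]; last by rewrite mxE expr2 mulr0 eqxx.
apply/matrixP => i j; rewrite (ord1 j) mxE.
by move: (x0 i (mem_index_enum i)); rewrite sqrf_eq0 => /eqP.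
Qed.

End BilinearForm.

Section Householder.
Variables (R : realFieldType) (n : nat) (w : 'cV[R]_n).

Definition householder : 'M[R]_n := 1%:M - (2 / form 1%:M w w) *: (w *m w^T).

Lemma trmx_householder : householder^T = householder.
Proof. by rewrite /householder linearB linearZ /= trmx1 trmx_mul trmxK. Qed.

Lemma mxtrace_householderM (B : 'M[R]_n) :
  \tr (householder *m B) = \tr B - 2 / form 1%:M w w * form B w w.
Proof. by rewrite mulmxBl mul1mx -scalemxAl linearB linearZ /= mxtrace_outerM. Qed.

Lemma form_householderM (B : 'M[R]_n) x y :
  form (householder *m B) x y =
  form B x y - 2 / form 1%:M w w * (form 1%:M x w * form B w y).
Proof. by rewrite mulmxBl mul1mx -scalemxAl formBm formZm form_outerM. Qed.

Hypothesis w_neq0 : form 1%:M w w != 0.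

Lemma householderK : householder *m householder = 1%:M.
Proof.
rewrite /householder mulmxBl mul1mx mulmxBr mulmx1 -scalemxAl -scalemxAr.
rewrite outer_mulmx !scalerA.
have -> : 2 / form 1%:M w w * (2 / form 1%:M w w) * form 1%:M w w =
          2 / form 1%:M w w + 2 / form 1%:M w w by field.
by rewrite scalerDl opprD opprK addKr subrK.
Qed.

Lemma det_householder : \det householder = -1.
Proof.
have -> : householder = 1%:M + (- (2 / form 1%:M w w) *: w) *m w^T.
  by rewrite /householder -scalemxAl scaleNr.
rewrite det1D_mulmxC -scalemxAr det_mx11 3!mxE eqxx mulr1n.
have -> : (w^T *m w) 0 0 = form 1%:M w w by rewrite /form mulmx1.
by field.
Qed.

End Householder.

Lemma quadratic_ge0_lincoef0 (R : realFieldType) (a b : R) :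
  (forall t, 0 <= a * t ^+ 2 + b * t) -> b = 0.
Proof.
move=> ab_ge0; apply/eqP/negPn/negP => b_neq0.
have K_gt0 : 0 < `|a| + 1 by rewrite ltr_wpDl.
have := ab_ge0 (- b / (`|a| + 1)); apply/negP; rewrite -ltNge.
have -> : a * (- b / (`|a| + 1)) ^+ 2 + b * (- b / (`|a| + 1)) =
          b ^+ 2 / (`|a| + 1) ^+ 2 * (a - (`|a| + 1)).
  by field; rewrite gt_eqF.
have bK_gt0 : 0 < b ^+ 2 / (`|a| + 1) ^+ 2.
  by apply: divr_gt0; [rewrite exprn_even_gt0 | exact: exprn_gt0].
by rewrite pmulr_rlt0 // subr_lt0 ltr_pwDr // ler_norm.
Qed.

Section Orthogonal.
Variables (R : realType) (n : nat).
Implicit Types (P Q B : 'M[R]_n) (w : 'cV[R]_n).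

Lemma orth1 : orth_set (1%:M : 'M[R]_n).
Proof. by rewrite /orth_set /= trmx1 mulmx1. Qed.

Lemma orth_mulmx P Q : orth_set P -> orth_set Q -> orth_set (P *m Q).
Proof.
rewrite /orth_set /= => PPT QQT.
by rewrite trmx_mul mulmxA -(mulmxA P) QQT mulmx1.
Qed.

Lemma orth_trmx_mulmx Q : orth_set Q -> Q^T *m Q = 1%:M.
Proof. exact: mulmx1C. Qed.

Lemma orth_householder w : form 1%:M w w != 0 -> orth_set (householder w).
Proof. by move=> w_neq0; rewrite /orth_set /= trmx_householder householderK. Qed.

Lemma det_orth Q : orth_set Q -> \det Q = 1 \/ \det Q = -1.
Proof.
move=> QQT; have /eqP : \det Q ^+ 2 = 1 by rewrite expr2 -{2}det_tr -det_mulmx QQT det1.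
by rewrite sqrf_eq1 => /orP [] /eqP; [left | right].
Qed.

Lemma trace_max_sym B :
  (forall Q, orth_set Q -> \tr (Q^T *m B) <= \tr B) -> B^T = B.
Proof.
move=> Bmax; apply/matrixP => i j; rewrite mxE.
have [->//|ij] := eqVneq j i.
apply/eqP; rewrite -subr_eq0; apply/eqP.
apply: (@quadratic_ge0_lincoef0 _ (B i i + B j j)) => t.
pose e k : 'cV[R]_n := delta_mx k 0.
pose w := e i + t *: e j.
have ji : (i == j) = false by rewrite eq_sym (negbTE ij).
have q_gt0 : 0 < 1 + t ^+ 2 by rewrite ltr_pwDl // sqr_ge0.
have ee : form 1%:M (e i) (e i) = 1 by rewrite form_delta mxE eqxx.
have ww : form 1%:M w w = 1 + t ^+ 2.
  rewrite !(formDl, formDr, formZl, formZr) !form_delta !mxE !eqxx (negbTE ij) ji /=.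
  ring.
have e_neq0 : form 1%:M (e i) (e i) != 0 by rewrite ee oner_eq0.
have w_neq0 : form 1%:M w w != 0 by rewrite ww gt_eqF.
(* The reflections in [e i] and [w] compose to a rotation of the (i, j)-plane. *)
have := Bmax _ (orth_mulmx (orth_householder e_neq0) (orth_householder w_neq0)).
rewrite trmx_mul !trmx_householder -mulmxA mxtrace_householderM form_householderM.
rewrite mxtrace_householderM ee ww !(formDl, formDr, formZl, formZr) !form_delta.
rewrite !mxE eqxx (negbTE ij) /= mulr0 addr0 mul1r !divr1.
set u := 2 / (1 + t ^+ 2).
rewrite -addrA -opprD gerBl.
set Y := (X in u * X) => h.
have -> : (B i i + B j j) * t ^+ 2 + (B j i - B i j) * t =
          (1 + t ^+ 2) / 2 * (2 * B i i + u * Y) by rewrite /Y /u; field; rewrite gt_eqF.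
by rewrite mulr_ge0 // divr_ge0 // ltW.
Qed.

End Orthogonal.

Section DetLowerBound.
Variable R : realFieldType.

Lemma form_block n (a t : R) (r : 'rV[R]_n) (C : 'M[R]_n) (w : 'cV[R]_n) :
  form (block_mx a%:M r r^T C) (col_mx t%:M w) (col_mx t%:M w) =
  a * t ^+ 2 + 2 * t * (r *m w) 0 0 + form C w w.
Proof.
rewrite /form tr_col_mx tr_scalar_mx mul_row_block mul_row_col !mul_scalar_mx.
rewrite mul_mx_scalar mulmxDl -scalemxAl -trmx_mul !mxE eqxx mulr1n.
ring.
Qed.

Lemma form1_col_mx n (t : R) (w : 'cV[R]_n) :
  form 1%:M (col_mx t%:M w) (col_mx t%:M w) = t ^+ 2 + form 1%:M w w.
Proof.
have -> : 1%:M = block_mx 1%:M 0 (0 : 'rV[R]_n)^T 1%:M :> 'M_(1 + n).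
  by rewrite trmx0 -scalar_mx_block.
by rewrite form_block mul1r mul0mx mxE mulr0 addr0.
Qed.

Lemma sym_block_mx n (B : 'M[R]_(1 + n)) : B^T = B ->
  B = block_mx (ulsubmx B 0 0)%:M (ursubmx B) (ursubmx B)^T (drsubmx B).
Proof.
by move=> symB; rewrite -mx11_scalar trmx_ursub symB submxK.
Qed.

Lemma form_schur_complement n (a : R) (r : 'rV[R]_n) (C : 'M[R]_n) (w : 'cV[R]_n) :
  a != 0 ->
  let x := col_mx (- ((r *m w) 0 0 / a))%:M w in
  form (block_mx a%:M r r^T C) x x = form (C - a^-1 *: (r^T *m r)) w w.
Proof.
move=> a_neq0 x; rewrite form_block formBm formZm.
have -> : form (r^T *m r) w w = (r *m w) 0 0 ^+ 2.
  by rewrite /form mulmxA -trmx_mul -mulmxA mxE big_ord1 mxE expr2.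
by field.
Qed.

Lemma psd_block0_ursub0 n (r : 'rV[R]_n) (C : 'M[R]_n) :
  (forall x, 0 <= form (block_mx 0%:M r r^T C) x x) -> r = 0.
Proof.
move=> psd; apply/rowP => j; rewrite mxE.
suff /eqP : 2 * r 0 j = 0 by rewrite mulf_eq0 pnatr_eq0 => /eqP.
apply: (@quadratic_ge0_lincoef0 _ (C j j)) => t.
have := psd (col_mx 1%:M (t *: delta_mx j 0)).
rewrite form_block formZl formZr form_delta -scalemxAr -colE !mxE.
by move=> h; nra.
Qed.

Lemma expn_le_det n (B : 'M[R]_n) (m : R) : B^T = B -> 0 <= m ->
  (forall x, m * form 1%:M x x <= form B x x) -> m ^+ n <= \det B.
Proof.
elim: n B => [B _ _ _|n IH]; first by rewrite expr0 det_mx00.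
rewrite -[n.+1]/(1 + n)%N => B symB m_ge0 Bm.
rewrite [B](sym_block_mx symB) in Bm *.
set a := ulsubmx B 0 0 in Bm *; set r := ursubmx B in Bm *.
set C := drsubmx B in Bm *.
have m_le_a : m <= a.
  have := Bm (col_mx 1%:M 0).
  by rewrite form1_col_mx form_block !formr0 mulmx0 [X in 2 * _ * X]mxE expr1n
    addr0 !mulr1 mulr0 !addr0.
have [a0|a_neq0] := eqVneq a 0.
  have m0 : m = 0 by apply/le_anti; rewrite m_ge0 -a0 m_le_a.
  have r0 : r = 0.
    apply: (@psd_block0_ursub0 _ r C) => x.
    by have := Bm x; rewrite a0 m0 mul0r.
  by rewrite a0 r0 m0 det_lblock det_scalar1 mul0r expr0n.
have a_gt0 : 0 < a by rewrite lt_neqAle eq_sym a_neq0 (le_trans m_ge0).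
rewrite det_block_scalar // exprS ler_pM ?exprn_ge0 //; apply: IH => // [|w].
  by rewrite linearB linearZ /= trmx_mul trmxK trmx_drsub symB.
have := Bm (col_mx (- ((r *m w) 0 0 / a))%:M w).
rewrite form_schur_complement // form1_col_mx; apply: le_trans.
by rewrite ler_wpM2l // lerDr sqr_ge0.
Qed.

End DetLowerBound.

Section OrthArgmax.
Variables (R : realType) (n : nat).

Lemma orth_entry_le1 (Q : 'M[R]_n) i j : orth_set Q -> `|Q i j| <= 1.
Proof.
move=> QQT; have : (Q *m Q^T) i i = 1 by rewrite QQT mxE eqxx.
rewrite mxE (bigD1 j) //= mxE -expr2 => Qii.
rewrite -(expr_le1 (n := 2)) // real_normK ?num_real // -Qii lerDl.
by apply: sumr_ge0 => k _; rewrite mxE -expr2 sqr_ge0.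
Qed.

Lemma continuous_sumr (T : topologicalType) (I : finType) (F : I -> T -> R) :
  (forall i, continuous (F i)) -> continuous (fun x => \sum_i F i x).
Proof. by move=> F_cont; apply: continuous_big => //; exact: add_continuous. Qed.

Lemma continuous_vec_mx_entry i j :
  continuous (fun v : 'rV[R]_(n * n) => vec_mx v i j).
Proof.
have -> : (fun v : 'rV[R]_(n * n) => vec_mx v i j) = fun v => v 0 (mxvec_index i j).
  by apply/funext => v; rewrite mxE.
exact: coord_continuous.
Qed.

(* Heine-Borel ([bounded_closed_compact]) is stated for row vectors only, so
   O(n) is handled through its vectorization. *)
Lemma compact_orth_vec : compact [set v : 'rV[R]_(n * n) | orth_set (vec_mx v)].
Proof.
apply: bounded_closed_compact.
  rewrite /bounded_near /=; near=> M; move=> v /= vQ.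
  rewrite [leLHS]/Num.norm /= mx_normrE; apply: bigmax_le => [|[a k] _] /=.
    by near: M; apply: nbhs_pinfty_ge; rewrite num_real.
  case/mxvec_indexP: k => i j.
  rewrite (_ : v a (mxvec_index i j) = vec_mx v i j); last by rewrite mxE (ord1 a).
  apply: le_trans (orth_entry_le1 i j vQ) _.
  by near: M; apply: nbhs_pinfty_ge; rewrite num_real.
have -> : [set v : 'rV[R]_(n * n) | orth_set (vec_mx v)] =
    \bigcap_(p in [set: 'I_n * 'I_n])
      ((fun v => (vec_mx v *m (vec_mx v)^T) p.1 p.2) @^-1` [set (1%:M : 'M[R]_n) p.1 p.2]).
  apply/seteqP; split => [v /= vQ [i j] _ /=|v /= vQ]; first by rewrite vQ.
  by apply/matrixP => i j; exact: (vQ (i, j)).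
apply: closed_bigI => -[i j] _; apply: preimage_closed => [v _|]; last exact: closed_eq.
have -> : (fun v : 'rV[R]_(n * n) => (vec_mx v *m (vec_mx v)^T) i j) =
    fun v => \sum_k vec_mx v i k * vec_mx v j k.
  by apply/funext => w; rewrite mxE; apply: eq_bigr => k _; rewrite [_^T k j]mxE.
by apply: continuous_sumr => k {}v; apply: continuousM; exact: continuous_vec_mx_entry.
Unshelve. all: end_near.
Qed.

Lemma exists_orth_trace_argmax (A : 'M[R]_n) :
  exists2 Q, orth_set Q & forall P, orth_set P -> \tr (P^T *m A) <= \tr (Q^T *m A).
Proof.
have [||v /set_mem vQ vmax] :=
    compact_EVT_max (f := fun v : 'rV[R]_(n * n) => \tr ((vec_mx v)^T *m A)) _ compact_orth_vec.
- by exists (mxvec 1%:M); rewrite /= mxvecK; exact: orth1.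
- apply: continuous_subspaceT.
  have -> : (fun v : 'rV[R]_(n * n) => \tr ((vec_mx v)^T *m A)) =
      fun v => \sum_i \sum_k vec_mx v k i * A k i.
    by apply/funext => v; apply: eq_bigr => i _; rewrite mxE; apply: eq_bigr => k _; rewrite mxE.
  apply: continuous_sumr => i; apply: continuous_sumr => k v.
  by apply: continuousM; [exact: continuous_vec_mx_entry | exact: cst_continuous].
exists (vec_mx v) => // P PQ; have := vmax (mxvec P); rewrite mxvecK; apply.
by apply/mem_set; rewrite /= mxvecK.
Qed.

End OrthArgmax.

Lemma le_powR_invn (R : realType) d (x y : R) :
  (0 < d)%N -> 0 <= x -> x ^+ d <= y -> x <= y `^ d%:R^-1.
Proof.
move=> d_gt0 x_ge0 xy; have y_ge0 : 0 <= y by apply: le_trans xy; exact: exprn_ge0.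
have {1}-> : x = (x ^+ d) `^ d%:R^-1.
  by rewrite -powR_mulrn // -powRrM mulfV ?powRr1 // pnatr_eq0 -lt0n.
by apply: ge0_ler_powR; rewrite ?nnegrE ?invr_ge0 ?exprn_ge0.
Qed.

Section Distances.
Variables (R : realType) (d : nat).
Implicit Types (A Q : 'M[R]_d) (S : set 'M[R]_d).

Lemma frob_sqr A : frob A ^+ 2 = \tr (A^T *m A).
Proof.
rewrite /frob sqr_sqrtr; last by do 2!apply: sumr_ge0 => ? _; exact: sqr_ge0.
rewrite /mxtrace exchange_big; apply: eq_bigr => j _; rewrite mxE.
by apply: eq_bigr => i _; rewrite mxE expr2.
Qed.

Lemma frob_subr_orth_sqr A Q : orth_set Q ->
  frob (A - Q) ^+ 2 = \tr (A^T *m A) - 2 * \tr (Q^T *m A) + d%:R.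
Proof.
move=> QQT; rewrite frob_sqr [(A - Q)^T]linearB /= mulmxBl !mulmxBr.
rewrite (orth_trmx_mulmx QQT) !linearB /= mxtrace1 -[\tr (A^T *m Q)]mxtrace_tr.
by rewrite trmx_mul trmxK opprK; ring.
Qed.

Lemma mdist_ge0 A S : S !=set0 -> 0 <= mdist A S.
Proof.
move=> [Q SQ]; apply: lb_le_inf; first by exists (frob (A - Q)), Q.
by move=> _ [P _ <-]; exact: sqrtr_ge0.
Qed.

Lemma mdist_le A Q S : S Q -> mdist A S <= frob (A - Q).
Proof.
by move=> SQ; apply: ge_inf; [exists 0 => _ [P _ <-]; exact: sqrtr_ge0 | exists Q].
Qed.

Lemma mdist_sqr_le A Q S : S Q -> mdist A S ^+ 2 <= frob (A - Q) ^+ 2.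
Proof.
move=> SQ; rewrite ler_pXn2r ?nnegrE ?sqrtr_ge0 ?mdist_le //.
by apply: mdist_ge0; exists Q.
Qed.

Lemma mdist_orth_argmax A Q : orth_set Q ->
    (forall P, orth_set P -> \tr (P^T *m A) <= \tr (Q^T *m A)) ->
  mdist A (@orth_set R d) = frob (A - Q).
Proof.
move=> QQT Qmax; apply/le_anti; rewrite mdist_le //=.
apply: lb_le_inf; first by exists (frob (A - Q)), Q.
move=> _ [P PPT <-]; rewrite -(ler_pXn2r (n := 2)) ?nnegrE ?sqrtr_ge0 //.
by rewrite !frob_subr_orth_sqr // lerD2r lerD2l lerN2 ler_pM2l // Qmax.
Qed.

Lemma frob_subr_householder_sqr A Q w : orth_set Q -> form 1%:M w w != 0 ->
  frob (A - Q *m householder w) ^+ 2 =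
  frob (A - Q) ^+ 2 + 4 * (form (Q^T *m A) w w / form 1%:M w w).
Proof.
move=> QQT w_neq0; have QH := orth_mulmx QQT (orth_householder w_neq0).
rewrite !frob_subr_orth_sqr // trmx_mul trmx_householder -mulmxA mxtrace_householderM.
by field.
Qed.

Lemma mdist_sorth_reflection A Q w :
    orth_set Q -> \det Q = -1 -> form 1%:M w w != 0 ->
  mdist A (@sorth_set R d) ^+ 2 <=
    frob (A - Q) ^+ 2 + 4 * (form (Q^T *m A) w w / form 1%:M w w).
Proof.
move=> QQT detQ w_neq0; rewrite -frob_subr_householder_sqr //.
apply: mdist_sqr_le; split; first exact: orth_mulmx QQT (orth_householder w_neq0).
by rewrite det_mulmx detQ det_householder // mulN1r opprK.
Qed.

End Distances.

Unset Implicit Arguments.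

Theorem lemmaA5 (R : realType) (d : nat) (A : 'M[R]_d) :
  mdist A (@sorth_set R d) ^+ 2 <=
    mdist A (@orth_set R d) ^+ 2
    + 4 * (`|\det A| `^ (d%:R^-1)) * (if \det A < 0 then 1 else 0).
Proof.
set extra := 4 * _ * _.
have extra_ge0 : 0 <= extra by rewrite !mulr_ge0 ?powR_ge0 //; case: ifP.
have [Q QQT Qmax] := exists_orth_trace_argmax A.
have distO := mdist_orth_argmax QQT Qmax.
have [detQ|detQ] := det_orth QQT.
  by rewrite (le_trans (mdist_sqr_le A (_ : sorth_set Q))) // distO lerDl.
(* Composing Q with any reflection gives an element of SO(d), so m bounds the
   Rayleigh quotient of Q^T A from below. *)
set m := (mdist A (@sorth_set R d) ^+ 2 - mdist A (@orth_set R d) ^+ 2) / 4.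
have m_form w : m * form 1%:M w w <= form (Q^T *m A) w w.
  have [->|w_neq0] := eqVneq w 0; first by rewrite !formr0 mulr0.
  have q_gt0 : 0 < form 1%:M w w by rewrite lt_neqAle eq_sym form1_eq0 w_neq0 form1_ge0.
  rewrite -ler_pdivlMr //; have := mdist_sorth_reflection A QQT detQ (lt0r_neq0 q_gt0).
  by rewrite -distO /m; lra.
have [m_le0|m_gt0] := lerP m 0; first by rewrite /m in m_le0; lra.
have symB : (Q^T *m A)^T = Q^T *m A.
  apply: trace_max_sym => P PPT; rewrite mulmxA -trmx_mul.
  exact: Qmax (orth_mulmx QQT PPT).
have := expn_le_det symB (ltW m_gt0) m_form.
rewrite det_mulmx det_tr detQ mulN1r => m_le_detA.
have d_gt0 : (0 < d)%N.
  by case: (posnP d) => // d0; subst d; move: detQ; rewrite det_mx00; lra.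
have detA_lt0 : \det A < 0.
  by rewrite -oppr_gt0 (lt_le_trans _ m_le_detA) // exprn_gt0.
have := le_powR_invn d_gt0 (ltW m_gt0) m_le_detA.
by rewrite /extra detA_lt0 ltr0_norm // mulr1 /m; lra.
Qed.
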